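(* Let $N,M\ge1$, $\mathbf{y}\in\mathbb{C}^M$, $\mathbf{x}\in\mathbb{R}^N$, $\mu_1,\dots,\mu_N\in\mathbb{R}$, $\sigma_1,\dots,\sigma_N>0$, $\delta^2>0$, $\sigma_h^2>0$, $\sigma_w^2>0$, and let $c=\exp\left(\frac{2\pi j}{N+1}\right)$ with $j=\sqrt{-1}$. Consider latent variables $T\in\{0,1,\dots,N\}$ and $\boldsymbol\theta=[\theta_1,\dots,\theta_N]^T\in(0,1)^N$ with joint density (with observation $\mathbf{y}$) $$p(\mathbf{y},T=m,\boldsymbol\theta\mid\boldsymbol\Phi)=\frac{1}{[2\pi(\sigma_h^2m+\sigma_w^2)]^M}\exp\left(-\frac{\|\mathbf{y}\|_2^2}{2(\sigma_h^2m+\sigma_w^2)}\right)\cdot P(m\mid\boldsymbol\theta)\cdot p(\boldsymbol\theta\mid\mathbf{x}),$$ where $P(m\mid\boldsymbol\theta)=\frac{1}{N+1}\sum_{\ell=0}^N c^{-\ell m}\prod_{k=1}^N[1+(c^\ell-1)\theta_k]$ (the Poisson-binomial probability of $m$ successes in independent Bernoulli trials with success probabilities $\theta_1,\dots,\theta_N$) and $$p(\boldsymbol\theta\mid\mathbf{x})=\left(\prod_{n=1}^N\frac{\sigma_n}{\theta_n-\theta_n^2}\right)\frac{1}{(2\pi)^{N/2}\delta^N}\exp\left(-\frac{\sum_{n=1}^N\left(-\sigma_n\log\left(\frac{1}{\theta_n}-1\right)+\mu_n-x_n\right)^2}{2\delta^2}\right).$$ Let $q(T)$ be a probability mass function on $\{0,\dots,N\}$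 and $q(\theta_1),\dots,q(\theta_N)$ probability densities on $(0,1)$, and let $\mathbb{E}$ denote expectation with respect to the product distribution $q(T)\prod_n q(\theta_n)$. Then the mean-field (variational E-step) updates $$q^*(T)\propto\exp\left\{\mathbb{E}_{\boldsymbol\theta}\left[\log p(\mathbf{y},T,\boldsymbol\theta\mid\boldsymbol\Phi)\right]\right\},\qquad q^*(\theta_n)\propto\exp\left\{\mathbb{E}_{T,\boldsymbol\theta\setminus\theta_n}\left[\log p(\mathbf{y},T,\boldsymbol\theta\mid\boldsymbol\Phi)\right]\right\}$$ are given by $$q^*(T=m)=\frac{g_a(m)}{\sum_{k=0}^N g_a(k)},\qquad q^*(\theta_n=z_n)=\frac{g_b(z_n)}{\int_0^1 g_b(z_n)\,dz_n},$$ where $$g_a(m)=\frac{\mathcal{F}_1(m)}{(\sigma_w^2+m\sigma_h^2)^M}\exp\left\{-\frac{\|\mathbf{y}\|_2^2}{2(\sigma_w^2+m\sigma_h^2)}\right\},$$ $$g_b(z_n)=\frac{\mathcal{F}_2(z_n)}{z_n(1-z_n)}\exp\left\{-\frac{1}{2\delta^2}\left(-\sigma_n\log\left(\frac{1}{z_n}-1\right)+\mu_n-x_n\right)^2\right\},$$ $$\mathcal{F}_1(m)=\exp\left\{\mathbb{E}_{\boldsymbol\theta}\left(\log\Big(\sum_{\ell=0}^N c^{-\ell m}\prod_{k=1}^N[1+(c^\ell-1)\theta_k]\Big)\right)\right\},$$ $$\mathcal{F}_2(z_n)=\left.\exp\left\{\mathbb{E}_{T,\boldsymbol\theta\setminus\theta_n}\left(\log\Big(\sum_{\ell=0}^N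 c^{-\ell T}\prod_{k=1}^N[1+(c^\ell-1)\theta_k]\Big)\right)\right\}\right|_{\theta_n=z_n}.$$
   Context: $\boldsymbol\Phi=\{\mathbf{x},\delta^2,\sigma_h^2,\sigma_w^2\}$ is the parameter set. $\mathbb{E}_{\boldsymbol\theta}$ is expectation over $\boldsymbol\theta\sim\prod_k q(\theta_k)$; $\mathbb{E}_{T,\boldsymbol\theta\setminus\theta_n}$ is expectation over $T\sim q(T)$ and $\theta_k\sim q(\theta_k)$, $k\ne n$, independently, with $\theta_n$ held fixed. The sum $\sum_{\ell}c^{-\ell m}\prod_k[1+(c^\ell-1)\theta_k]$ equals $(N+1)P(m\mid\boldsymbol\theta)$, a positive real number. Expectations are assumed finite. *)

From HB Require Import structures.
From mathcomp Require Import all_boot all_order all_algebra.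
From mathcomp Require Import all_classical all_reals all_analysis.
From mathcomp Require Import complex.
Set Implicit Arguments. Unset Strict Implicit. Unset Printing Implicit Defensive.
Import Order.TTheory GRing.Theory Num.Theory.
Local Open Scope ring_scope.
Local Open Scope classical_set_scope.

Section Model.
Variable R : realType.
Local Notation C := (complex.complex R).
Local Notation Re := (@complex.Re R).
Local Notation Im := (@complex.Im R).
Local Notation rC x := (complex.real_complex R x).

(* c = exp(2 pi j/(N+1)), written in Euler form cos + j sin *)
Definition cunit (N : nat) : C :=
  complex.Complex (cos (2 * pi / N.+1%:R)) (sin (2 * pi / N.+1%:R)).

Definition upd (th : nat -> R) (k : nat) (t : R) : nat -> R :=
  fun j => if j == k then t else th j.

Definition Ssum (N m : nat) (th : nat -> R) : C :=
  \sum_(l < N.+1) (cunit N ^- (l * m)%N *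
     \prod_(k < N) (1 + (cunit N ^+ l - 1) * rC (th k))).

(* Poisson-binomial pmf P(m | theta) (S is a positive real, we take its real part) *)
Definition PB (N m : nat) (th : nat -> R) : R := Re (Ssum N m th) / N.+1%:R.

Definition ynorm2 (M : nat) (y : 'I_M -> C) : R :=
  \sum_(i < M) ((Re (y i)) ^+ 2 + (Im (y i)) ^+ 2).

Definition prior (N : nat) (x mu sig : 'I_N -> R) (delta2 : R) (th : nat -> R) : R :=
  (\prod_(n < N) (sig n / (th n - th n ^+ 2))) *
  (1 / ((Num.sqrt (2 * pi)) ^+ N * (Num.sqrt delta2) ^+ N)) *
  expR (- (\sum_(n < N) (- sig n * ln (1 / th n - 1) + mu n - x n) ^+ 2)
          / (2 * delta2)).

Definition joint (N M : nat) (y : 'I_M -> C) (x mu sig : 'I_N -> R)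
    (delta2 sh2 sw2 : R) (m : nat) (th : nat -> R) : R :=
  1 / (2 * pi * (sh2 * m%:R + sw2)) ^+ M *
  expR (- ynorm2 y / (2 * (sh2 * m%:R + sw2))) *
  PB N m th * prior x mu sig delta2 th.

(* Iterated expectation w.r.t. the product of densities q k on (0,1), over the
   coordinates k < K that are not skipped; skipped coordinates stay as in th. *)
Fixpoint Eiter (q : nat -> R -> R) (skip : pred nat) (K : nat)
    (f : (nat -> R) -> R) (th : nat -> R) : R :=
  match K with
  | 0 => f th
  | K'.+1 => if skip K' then Eiter q skip K' f th
             else Rintegral (@lebesgue_measure R) `]0, 1[
                    (fun t => q K' t * Eiter q skip K' f (upd th K' t))
  end.

(* finiteness of the iterated expectation: every integral involved is
   (Lebesgue) integrable *)
Fixpoint Eiter_ok (q : nat -> R -> R) (skip : pred nat) (K : nat)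
    (f : (nat -> R) -> R) (th : nat -> R) : Prop :=
  match K with
  | 0 => True
  | K'.+1 => if skip K' then Eiter_ok q skip K' f th
             else (@lebesgue_measure R).-integrable `]0, 1[
                    (fun t => (q K' t * Eiter q skip K' f (upd th K' t))%:E)
                  /\ (forall t, 0 < t < 1 -> Eiter_ok q skip K' f (upd th K' t))
  end.

Definition th0 : nat -> R := fun _ => 0.

Definition Eth (N : nat) (q : nat -> R -> R) (f : (nat -> R) -> R) : R :=
  Eiter q pred0 N f th0.

Definition ETth_but (N : nat) (qT : nat -> R) (q : nat -> R -> R) (n : nat)
    (F : nat -> (nat -> R) -> R) (z : R) : R :=
  \sum_(m < N.+1) qT m * Eiter q (pred1 n) N (F m) (upd th0 n z).

Definition F1 (N : nat) (q : nat -> R -> R) (m : nat) : R :=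
  expR (Eth N q (fun th => ln (Re (Ssum N m th)))).

Definition F2 (N : nat) (qT : nat -> R) (q : nat -> R -> R) (n : nat) (z : R) : R :=
  expR (ETth_but N qT q n (fun m th => ln (Re (Ssum N m th))) z).

Definition ga (N M : nat) (y : 'I_M -> C) (sh2 sw2 : R) (q : nat -> R -> R)
    (m : nat) : R :=
  F1 N q m / (sw2 + m%:R * sh2) ^+ M *
  expR (- ynorm2 y / (2 * (sw2 + m%:R * sh2))).

Definition gb (N : nat) (x mu sig : 'I_N -> R) (delta2 : R) (qT : nat -> R)
    (q : nat -> R -> R) (n : 'I_N) (z : R) : R :=
  F2 N qT q n z / (z * (1 - z)) *
  expR (- (1 / (2 * delta2)) * (- sig n * ln (1 / z - 1) + mu n - x n) ^+ 2).

End Model.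

From HB Require Import structures.
From mathcomp Require Import all_boot all_order all_algebra.
From mathcomp Require Import all_classical all_reals all_analysis.
From mathcomp Require Import complex.
From mathcomp Require Import ring lra zify.
Set Implicit Arguments. Unset Strict Implicit. Unset Printing Implicit Defensive.
Import Order.TTheory GRing.Theory Num.Theory.
Local Open Scope ring_scope.
Local Open Scope classical_set_scope.

(* The joint density is [gauss_lik m * (Re S(m, th) / (N + 1)) * prior th].  Expanding
   the product in S over subsets and using the orthogonality of the (N+1)-th roots of
   unity, S(m, th) / (N + 1) is the Poisson-binomial probability of m successes, a sum
   of Bernoulli weights, hence positive on the open cube; this is what allows ln to be
   split over the factors ([ln] is 0 on nonpositive reals).  The log prior is a sum of
   one-coordinate terms.  Since expectations are linear, E ln p is E ln Re S plus terms
   that either depend only on the variable being updated or not at all; the latter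
   become a positive constant factor after exponentiation and cancel upon
   normalisation. *)

Lemma sum_expr_unity (F : idomainType) (w : F) n :
  w ^+ n = 1 -> w != 1 -> \sum_(l < n) w ^+ l = 0.
Proof.
move=> wn1 w1; apply/eqP; move: (subrX1 w n); rewrite wn1 subrr => /esym/eqP.
by rewrite mulf_eq0 subr_eq0 (negbTE w1).
Qed.

Lemma normalize_scale (F : fieldType) (I : finType) (a b : I -> F) (c : F) :
  c != 0 -> (forall i, a i = b i * c) ->
  forall i, a i / \sum_j a j = b i / \sum_j b j.
Proof.
move=> c0 ab i; rewrite ab (eq_bigr _ (fun j _ => ab j)) -big_distrl /=.
by rewrite invfM mulrACA mulfV // mulr1.
Qed.

Lemma Rintegral_normalize_scale (R : realType) d (T : measurableType d)
    (mu : {measure set T -> \bar R}) (A : set T) (f g : T -> R) (c : R) :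
  measurable A -> c != 0 -> (forall t, A t -> f t = g t * c) ->
  mu.-integrable A (EFin \o f) ->
  forall t, A t -> f t / Rintegral mu A f = g t / Rintegral mu A g.
Proof.
move=> mA c0 fg fi t At.
have fg_in : {in A, f =1 fun t => g t * c} by move=> s /set_mem; exact: fg.
have gi : mu.-integrable A (EFin \o g).
  apply: (eq_integrable mA) (integrableZl mA c^-1 fi) => s /set_mem As.
  by rewrite /= fg // -EFinM mulrCA mulVf // mulr1.
rewrite (eq_Rintegral _ fg_in) RintegralZr // fg //.
by rewrite invfM mulrACA mulfV // mulr1.
Qed.

Lemma ln_prod (R : realType) (I : Type) (r : seq I) (P : pred I) (F : I -> R) :
  (forall i, P i -> 0 < F i) ->
  ln (\prod_(i <- r | P i) F i) = \sum_(i <- r | P i) ln (F i).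
Proof.
move=> F_gt0; elim: r => [|i r IH]; first by rewrite !big_nil ln1.
rewrite !big_cons; case: ifP => Pi //.
by rewrite lnM ?IH // posrE ?F_gt0 // prodr_gt0.
Qed.

Lemma lnM3 (R : realType) (a b c : R) : 0 < a -> 0 < b -> 0 < c ->
  ln (a * b * c) = ln a + ln b + ln c.
Proof. by move=> a0 b0 c0; rewrite !lnM ?posrE ?mulr_gt0. Qed.

Section RootsOfUnity.
Variable R : realType.
Local Notation c := (cunit R).

Lemma cunitX N d : c N ^+ d =
  Complex (cos (d%:R * (2 * pi / N.+1%:R))) (sin (d%:R * (2 * pi / N.+1%:R))).
Proof.
elim: d => [|d IH]; first by rewrite expr0 mul0r cos0 sin0.
rewrite exprSr IH /cunit; apply/eqP.
rewrite eq_complex /= [X in _ && (X == _)]addrC -cosD -sinD.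
by rewrite -[d.+1%:R]natr1 [(d%:R + 1) * _]mulrDl mul1r !eqxx.
Qed.

Lemma cos_lt1 (x : R) : 0 < x < pi *+ 2 -> cos x < 1.
Proof.
move=> /andP[x0 x2pi].
have -> : x = (x / 2) *+ 2 by rewrite -mulr_natr mulfVK ?pnatr_eq0.
have sin_half_gt0 : 0 < sin (x / 2).
  by apply: sin_gt0_pi; rewrite divr_gt0 //= ltr_pdivrMr // mulr_natr.
rewrite cos_mulr2n cos2sin2; nra.
Qed.

Lemma cunit_prim N : N.+1.-primitive_root (c N).
Proof.
apply/andP; split => //; apply/forallP => i; rewrite unity_rootE cunitX.
have N1_gt0 : (0 : R) < N.+1%:R by rewrite ltr0n.
have [-> | iN] := eqVneq i.+1 N.+1.
  by rewrite mulrCA mulfV ?pnatr_eq0 // mulr1 mulr_natl cos2pi sin2pi eqxx.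
apply/eqP/negP => /eqP[cos1 _].
suff : cos (i.+1%:R * (2 * pi / N.+1%:R)) < 1 :> R by rewrite cos1 ltxx.
have i1_lt : (i.+1 < N.+1)%N by rewrite ltn_neqAle iN ltn_ord.
apply: cos_lt1; apply/andP; split.
  by rewrite mulr_gt0 ?ltr0n // divr_gt0 // mulr_gt0 // pi_gt0.
rewrite mulrA ltr_pdivrMr // -mulr_natr.
have : (i.+1%:R : R) < N.+1%:R by rewrite ltr_nat.
have := pi_gt0 R; nra.
Qed.

Lemma cunit_neq0 N : c N != 0.
Proof. by rewrite (prim_root_eq0 (cunit_prim N)). Qed.

Lemma sum_cunit_orth N j m : (j <= N)%N -> (m <= N)%N ->
  \sum_(l < N.+1) c N ^- (l * m) * c N ^+ (l * j) = if j == m then N.+1%:R else 0.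
Proof.
move=> jN mN; have cX0 k : c N ^+ k != 0 by rewrite expf_neq0 // cunit_neq0.
have [<- | jm] := eqVneq j m.
  under eq_bigr do rewrite mulVf //.
  by rewrite sumr_const card_ord.
set w := c N ^+ j / c N ^+ m.
have wl (l : 'I_N.+1) : c N ^- (l * m) * c N ^+ (l * j) = w ^+ l.
  by rewrite /w exprMn exprVn -!exprM mulrC ![(_ * l)%N]mulnC.
under eq_bigr do rewrite wl.
apply: sum_expr_unity.
  rewrite /w exprMn exprVn -!exprM ![(_ * N.+1)%N]mulnC !exprM.
  by rewrite (prim_expr_order (cunit_prim N)) !expr1n invr1 mulr1.
rewrite /w -(can_eq (mulfK (cX0 m))) mul1r divfK //.
by rewrite (eq_prim_root_expr (cunit_prim N)) !modn_small.
Qed.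

End RootsOfUnity.

Section PoissonBinomial.
Local Open Scope complex_scope.
Variable R : realType.

Definition bern_weight {N} (th : nat -> R) (f : {ffun 'I_N -> bool}) : R :=
  \prod_(k < N) (if f k then th k else 1 - th k).

Definition nsucc {N} (f : {ffun 'I_N -> bool}) : nat := (\sum_(k < N) f k)%N.

Lemma nsucc_le N (f : {ffun 'I_N -> bool}) : (nsucc f <= N)%N.
Proof.
rewrite -[X in (_ <= X)%N]card_ord -sum1_card.
by apply: leq_sum => k _; exact: leq_b1.
Qed.

Lemma prod_bern_expand N (th : nat -> R) (u : R[i]) :
  \prod_(k < N) (1 + (u - 1) * (th k)%:C) =
  \sum_(f : {ffun 'I_N -> bool}) (bern_weight th f)%:C * u ^+ nsucc f.
Proof.
transitivity (\prod_(k < N) \sum_(b : bool) (if b then (th k)%:C * u else (1 - th k)%:C)).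
  by apply: eq_bigr => k _; rewrite big_bool /= rmorphB rmorph1; ring.
rewrite bigA_distr_bigA; apply: eq_bigr => f _.
rewrite /bern_weight rmorph_prod /nsucc -prodrXr -big_split /=.
by apply: eq_bigr => k _; case: (f k); rewrite ?mulr1.
Qed.

Lemma Ssum_expand N m (th : nat -> R) : (m <= N)%N ->
  Ssum N m th = (N.+1%:R * \sum_(f : {ffun 'I_N -> bool} | nsucc f == m) bern_weight th f)%:C.
Proof.
move=> mN; rewrite /Ssum.
under eq_bigr do rewrite prod_bern_expand big_distrr /=.
rewrite exchange_big /= rmorphM rmorph_sum /= big_distrr [RHS]big_mkcond /=.
apply: eq_bigr => f _.
under eq_bigr do rewrite mulrCA -exprM.
rewrite -big_distrr /= sum_cunit_orth ?nsucc_le //.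
by case: eqP => _; rewrite ?mulr0 // mulrC rmorph_nat.
Qed.

Lemma Re_Ssum_gt0 N m (th : nat -> R) : (m <= N)%N ->
  (forall k : 'I_N, 0 < th k < 1) -> 0 < complex.Re (Ssum N m th).
Proof.
move=> mN th01; rewrite Ssum_expand //= mulr_gt0 ?ltr0n //.
pose f0 : {ffun 'I_N -> bool} := [ffun k : 'I_N => (k < m)%N].
have f0m : nsucc f0 == m.
  apply/eqP; rewrite /nsucc -[RHS]card_ord -sum1_card.
  rewrite (big_ord_widen _ (fun=> 1%N) mN) [RHS]big_mkcond /=.
  by apply: eq_bigr => k _; rewrite ffunE.
rewrite (bigD1 f0) //= ltr_pwDl //.
  by apply: prodr_gt0 => k _; have /andP[? ?] := th01 k; case: (f0 k); rewrite ?subr_gt0.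
apply: sumr_ge0 => f _; apply: prodr_ge0 => k _; have /andP[? ?] := th01 k.
by case: (f k); rewrite ?subr_ge0 ltW.
Qed.

End PoissonBinomial.

Section IteratedExpectation.
Variable R : realType.
Local Notation mu := (@lebesgue_measure R).
Local Notation D := (`]0, 1[ : set (measurableTypeR R)).
Variable q : nat -> R -> R.

Let measurable_D : measurable D.
Proof. exact: measurable_itv. Qed.

Let in_D t : t \in D -> 0 < t < 1.
Proof. by rewrite inE /= in_itv. Qed.

Lemma integrable_scale (f : R -> R) (a : R) :
  mu.-integrable D (EFin \o f) -> mu.-integrable D (fun t => (a * f t)%:E).
Proof.
move=> fi; apply: (eq_integrable measurable_D) (integrableZl measurable_D a fi) => t _.
by rewrite EFinM.
Qed.

Lemma integrable_lin (f g : R -> R) (a b : R) :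
  mu.-integrable D (EFin \o f) -> mu.-integrable D (EFin \o g) ->
  mu.-integrable D (fun t => (a * f t + b * g t)%:E).
Proof.
move=> fi gi; have := integrableD measurable_D (integrable_scale a fi) (integrable_scale b gi).
by apply: (eq_integrable measurable_D) => t _; rewrite /= EFinD.
Qed.

(* The points at which [Eiter q skip K f th] evaluates [f]: [th] with its
   non-skipped coordinates below [K] resampled in (0, 1). *)
Definition admissible (skip : pred nat) (K : nat) (th th' : nat -> R) :=
  (forall k, (k < K)%N -> ~~ skip k -> 0 < th' k < 1) /\
  (forall k, (K <= k)%N || skip k -> th' k = th k).

Lemma admissibleS_skip (skip : pred nat) K (th th' : nat -> R) :
  skip K -> admissible skip K th th' -> admissible skip K.+1 th th'.
Proof.
move=> sK [h1 h2]; split => k.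
  move=> kK nsk; apply: h1 => //.
  by rewrite ltn_neqAle -ltnS kK andbT; apply: contraNneq nsk => ->.
by move=> /orP[kK | sk]; apply: h2; rewrite ?sk ?orbT // (ltnW kK).
Qed.

Lemma admissibleS_upd (skip : pred nat) K (th th' : nat -> R) t :
  ~~ skip K -> 0 < t < 1 -> admissible skip K (upd th K t) th' ->
  admissible skip K.+1 th th'.
Proof.
move=> nsK t01 [h1 h2]; have thK : th' K = t by rewrite h2 ?leqnn // /upd eqxx.
split => k.
  rewrite ltnS leq_eqVlt => /orP[/eqP -> _ | kK]; [by rewrite thK | exact: h1].
move=> hk; rewrite h2 /upd; last by case/orP: hk => [/ltnW -> | ->]; rewrite ?orbT.
by case: eqP hk => // ->; rewrite ltnn (negbTE nsK).
Qed.

Lemma Eiter_ext (skip : pred nat) K (f g : (nat -> R) -> R) th :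
  (forall th', admissible skip K th th' -> f th' = g th') ->
  Eiter q skip K f th = Eiter q skip K g th.
Proof.
elim: K th => [|K IH] th fg /=; first by apply: fg; split.
case: ifP => sK.
  by apply: IH => th' adm; apply: fg; exact: admissibleS_skip.
apply: eq_Rintegral => t /in_D t01; congr (_ * _).
by apply: IH => th' adm; apply: fg; apply: admissibleS_upd adm; rewrite ?sK.
Qed.

Lemma Eiter_ok_ext (skip : pred nat) K (f g : (nat -> R) -> R) th :
  (forall th', admissible skip K th th' -> f th' = g th') ->
  Eiter_ok q skip K f th -> Eiter_ok q skip K g th.
Proof.
elim: K th => [|K IH] th fg //=.
case: ifP => sK.
  by apply: IH => th' adm; apply: fg; exact: admissibleS_skip.
have fg_t t : 0 < t < 1 ->
    forall th', admissible skip K (upd th K t) th' -> f th' = g th'.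
  by move=> t01 th' adm; apply: fg; apply: admissibleS_upd adm; rewrite ?sK.
move=> [fi fok]; split; last by move=> t t01; exact: IH (fg_t t t01) (fok t t01).
apply: (eq_integrable measurable_D) fi => t /in_D t01.
by rewrite (Eiter_ext (fg_t t t01)).
Qed.

Lemma Eiter_indep (skip : pred nat) K n (f : (nat -> R) -> R) th1 th2 :
  (forall a b, (forall k, k != n -> a k = b k) -> f a = f b) ->
  (forall k, k != n -> th1 k = th2 k) ->
  Eiter q skip K f th1 = Eiter q skip K f th2.
Proof.
move=> hf; elim: K th1 th2 => [|K IH] th1 th2 h12 /=; first exact: hf.
case: ifP => _; first exact: IH.
apply: eq_Rintegral => t _; congr (_ * _); apply: IH => k kn.
by rewrite /upd; case: eqP => // _; exact: h12.
Qed.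

Lemma Eiter_lin (skip : pred nat) K (f g : (nat -> R) -> R) a b th :
  Eiter_ok q skip K f th -> Eiter_ok q skip K g th ->
  Eiter q skip K (fun th => a * f th + b * g th) th =
    a * Eiter q skip K f th + b * Eiter q skip K g th.
Proof.
elim: K th => [|K IH] th //=.
case: ifP => _; first exact: IH.
move=> [fi fok] [gi gok].
rewrite -!RintegralZl ?measurable_D // -RintegralD ?measurable_D //.
  by apply: eq_Rintegral => t /in_D t01; rewrite (IH _ (fok t t01) (gok t t01)); ring.
- exact: integrable_scale.
- exact: integrable_scale.
Qed.

Lemma Eiter_ok_lin (skip : pred nat) K (f g : (nat -> R) -> R) a b th :
  Eiter_ok q skip K f th -> Eiter_ok q skip K g th ->
  Eiter_ok q skip K (fun th => a * f th + b * g th) th.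
Proof.
elim: K th => [|K IH] th //=.
case: ifP => _; first exact: IH.
move=> [fi fok] [gi gok]; split; last by move=> t t01; apply: IH; [exact: fok | exact: gok].
apply: (eq_integrable measurable_D) (integrable_lin a b fi gi) => t /in_D t01.
by rewrite /= (Eiter_lin _ _ (fok t t01) (gok t t01)); congr EFin; ring.
Qed.

Lemma Eiter_invariant (skip : pred nat) K (f : (nat -> R) -> R) th :
  (forall k, (k < K)%N -> mu.-integrable D (EFin \o q k)) ->
  (forall k, (k < K)%N -> Rintegral mu D (q k) = 1) ->
  (forall th k t, ~~ skip k -> f (upd th k t) = f th) ->
  Eiter q skip K f th = f th.
Proof.
move=> qi qn f_inv; elim: K qi qn th => [|K IH] qi qn th //=.
have {}IH := IH (fun k kK => qi k (ltnW kK)) (fun k kK => qn k (ltnW kK)).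
case: ifP => sK; first exact: IH.
under eq_Rintegral do rewrite IH f_inv ?sK //.
by rewrite RintegralZr ?measurable_D ?qn ?mul1r ?qi.
Qed.

Lemma Eiter_ok_invariant (skip : pred nat) K (f : (nat -> R) -> R) th :
  (forall k, (k < K)%N -> mu.-integrable D (EFin \o q k)) ->
  (forall k, (k < K)%N -> Rintegral mu D (q k) = 1) ->
  (forall th k t, ~~ skip k -> f (upd th k t) = f th) ->
  Eiter_ok q skip K f th.
Proof.
move=> qi qn f_inv; elim: K qi qn th => [|K IH] qi qn th //=.
have qi' k : (k < K)%N -> mu.-integrable D (EFin \o q k) by move/ltnW; exact: qi.
have qn' k : (k < K)%N -> Rintegral mu D (q k) = 1 by move/ltnW; exact: qn.
case: ifP => sK; first exact: IH.
split=> [|t _]; last exact: IH.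
apply: (eq_integrable measurable_D) (integrable_scale (f th) (qi K (ltnSn K))) => t _.
by rewrite /= Eiter_invariant ?f_inv ?sK // mulrC.
Qed.

End IteratedExpectation.

Section LogJoint.
Variables (R : realType) (N M : nat) (y : 'I_M -> R[i]) (x mu sig : 'I_N -> R).
Variables (delta2 sh2 sw2 : R).
Hypotheses (sig_gt0 : forall n, 0 < sig n) (delta2_gt0 : 0 < delta2).
Hypotheses (sh2_gt0 : 0 < sh2) (sw2_gt0 : 0 < sw2).

Definition gauss_lik (m : nat) : R :=
  1 / (2 * pi * (sh2 * m%:R + sw2)) ^+ M *
  expR (- ynorm2 y / (2 * (sh2 * m%:R + sw2))).

Definition prior_term (k : 'I_N) (t : R) : R :=
  ln (sig k / (t - t ^+ 2)) - (- sig k * ln (1 / t - 1) + mu k - x k) ^+ 2 / (2 * delta2).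

Definition prior_norm : R := 1 / (Num.sqrt (2 * pi) ^+ N * Num.sqrt delta2 ^+ N).

Definition prior_rest (n : 'I_N) (th : nat -> R) : R :=
  \sum_(k < N | k != n) prior_term k (th k) + ln prior_norm.

Definition in_cube (th : nat -> R) := forall k : 'I_N, 0 < th k < 1.

Lemma gauss_lik_gt0 m : 0 < gauss_lik m.
Proof.
have var_gt0 : 0 < sh2 * m%:R + sw2 by rewrite ltr_wpDl // mulr_ge0 // ltW.
by rewrite mulr_gt0 ?expR_gt0 // divr_gt0 // exprn_gt0 // !mulr_gt0 // pi_gt0.
Qed.

Lemma prior_norm_gt0 : 0 < prior_norm.
Proof. by rewrite divr_gt0 // mulr_gt0 // exprn_gt0 // sqrtr_gt0 // mulr_gt0 // pi_gt0. Qed.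

Lemma prior_factor_gt0 k t : 0 < t < 1 -> 0 < sig k / (t - t ^+ 2).
Proof.
by move=> /andP[t0 t1]; rewrite divr_gt0 // -{1}(mulr1 t) expr2 -mulrBr mulr_gt0 ?subr_gt0.
Qed.

Lemma ln_prior th : in_cube th ->
  ln (prior x mu sig delta2 th) = \sum_(k < N) prior_term k (th k) + ln prior_norm.
Proof.
move=> th01; have fac_gt0 k : 0 < sig k / (th k - th k ^+ 2) by exact: prior_factor_gt0.
have prod_gt0 : 0 < \prod_(k < N) (sig k / (th k - th k ^+ 2)) by exact: prodr_gt0.
rewrite /prior -/prior_norm lnM3 ?expR_gt0 ?prior_norm_gt0 // expRK ln_prod //.
by rewrite sumrB -mulr_suml mulNr; ring.
Qed.

Lemma ln_prior_split n th : in_cube th ->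
  ln (prior x mu sig delta2 th) = prior_term n (th n) + prior_rest n th.
Proof. by move=> th01; rewrite ln_prior // (bigD1 n) //= addrA. Qed.

Lemma expR_prior_term n z : 0 < z < 1 ->
  expR (prior_term n z) =
  sig n / (z * (1 - z)) *
  expR (- (1 / (2 * delta2)) * (- sig n * ln (1 / z - 1) + mu n - x n) ^+ 2).
Proof.
move=> z01; rewrite /prior_term expRD lnK ?posrE ?prior_factor_gt0 //.
rewrite mulrBr mulr1 -expr2; congr (_ * expR _).
by field; rewrite gt_eqF.
Qed.

Lemma ln_joint m th : (m <= N)%N -> in_cube th ->
  ln (joint y x mu sig delta2 sh2 sw2 m th) =
  ln (complex.Re (Ssum N m th)) + ln (gauss_lik m / N.+1%:R) + ln (prior x mu sig delta2 th).
Proof.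
move=> mN th01.
have S_gt0 : 0 < complex.Re (Ssum N m th) by exact: Re_Ssum_gt0.
have P_gt0 : 0 < prior x mu sig delta2 th.
  apply: mulr_gt0; last exact: expR_gt0.
  apply: mulr_gt0; last exact: prior_norm_gt0.
  by apply: prodr_gt0 => k _; exact: prior_factor_gt0.
have g_gt0 : 0 < gauss_lik m / N.+1%:R by rewrite divr_gt0 ?gauss_lik_gt0 ?ltr0n.
have -> : joint y x mu sig delta2 sh2 sw2 m th =
    complex.Re (Ssum N m th) * (gauss_lik m / N.+1%:R) * prior x mu sig delta2 th.
  by rewrite /joint /PB -/(gauss_lik m); ring.
exact: lnM3.
Qed.

End LogJoint.

Section ExpectedLogJoint.
Variables (R : realType) (N M : nat) (y : 'I_M -> R[i]) (x mu sig : 'I_N -> R).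
Variables (delta2 sh2 sw2 : R).
Hypotheses (sig_gt0 : forall n, 0 < sig n) (delta2_gt0 : 0 < delta2).
Hypotheses (sh2_gt0 : 0 < sh2) (sw2_gt0 : 0 < sw2).
Variable q : nat -> R -> R.
Hypothesis q_int : forall k, (k < N)%N ->
  (@lebesgue_measure R).-integrable `]0, 1[ (EFin \o q k).
Hypothesis q_norm : forall k, (k < N)%N -> Rintegral (@lebesgue_measure R) `]0, 1[ (q k) = 1.

Local Notation lnJ m := (fun th => ln (joint y x mu sig delta2 sh2 sw2 m th)).
Local Notation lnS m := (fun th : nat -> R => ln (complex.Re (Ssum N m th))).
Local Notation lnP := (fun th => ln (prior x mu sig delta2 th)).

Lemma admissible_in_cube (skip : pred nat) (th th' : nat -> R) :
  (forall k : 'I_N, skip k -> 0 < th k < 1) -> admissible skip N th th' -> in_cube N th'.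
Proof.
move=> skip01 [resampled fixed] k; case sk: (skip k).
  by rewrite fixed ?sk ?orbT //; exact: skip01.
by apply: resampled; rewrite ?sk.
Qed.

Section FixedSkip.
Variables (skip : pred nat) (th : nat -> R) (m : nat).
Hypothesis skip01 : forall k : 'I_N, skip k -> 0 < th k < 1.
Hypothesis mN : (m <= N)%N.
Hypothesis okJ : Eiter_ok q skip N (lnJ m) th.
Hypothesis okS : Eiter_ok q skip N (lnS m) th.

Let lnJ_split th' : admissible skip N th th' ->
  lnJ m th' = lnS m th' + ln (gauss_lik y sh2 sw2 m / N.+1%:R) + lnP th'.
Proof. by move=> /(admissible_in_cube skip01) th'01; exact: ln_joint. Qed.

Let ok_one : Eiter_ok q skip N (fun _ => 1) th.
Proof. exact: Eiter_ok_invariant. Qed.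

(* Integrability of ln prior is not assumed: ln prior = ln joint - ln Re S - const. *)
Lemma Eiter_ok_ln_prior : Eiter_ok q skip N lnP th.
Proof.
have := Eiter_ok_lin 1 (- ln (gauss_lik y sh2 sw2 m / N.+1%:R))
  (Eiter_ok_lin 1 (-1) okJ okS) ok_one.
by apply: Eiter_ok_ext => th' /lnJ_split ->; ring.
Qed.

Lemma Eiter_ln_joint :
  Eiter q skip N (lnJ m) th =
  Eiter q skip N (lnS m) th + ln (gauss_lik y sh2 sw2 m / N.+1%:R) + Eiter q skip N lnP th.
Proof.
set c := ln _.
have -> : Eiter q skip N (lnJ m) th =
    Eiter q skip N (fun th' => 1 * (1 * lnS m th' + 1 * lnP th') + c * 1) th.
  by apply: Eiter_ext => th' /lnJ_split ->; rewrite /c; ring.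
have okP := Eiter_ok_ln_prior.
rewrite (Eiter_lin (f := fun th' => 1 * lnS m th' + 1 * lnP th') (g := fun=> 1) _ _
  (Eiter_ok_lin _ _ okS okP) ok_one).
by rewrite (Eiter_lin _ _ okS okP) (Eiter_invariant (f := fun=> 1)) //; ring.
Qed.

End FixedSkip.

Lemma expR_Eth_ln_joint m : (m <= N)%N ->
  Eiter_ok q pred0 N (lnJ m) (th0 R) -> Eiter_ok q pred0 N (lnS m) (th0 R) ->
  expR (Eth N q (lnJ m)) =
  ga N y sh2 sw2 q m * (expR (Eth N q lnP) / (N.+1%:R * (2 * pi) ^+ M)).
Proof.
move=> mN okJ okS; rewrite /Eth Eiter_ln_joint // !expRD.
rewrite lnK ?posrE ?divr_gt0 ?gauss_lik_gt0 ?ltr0n //.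
have var_gt0 : 0 < sw2 + m%:R * sh2 by rewrite ltr_pwDl // mulr_ge0 // ltW.
rewrite /ga /F1 /Eth /gauss_lik [sh2 * _ + _]addrC [sh2 * _]mulrC exprMn.
by field; rewrite ?expf_neq0 ?pnatr_eq0 ?lt0r_neq0 ?mulr_gt0 ?pi_gt0.
Qed.

Section ConditionalOnTheta.
Variables (qT : nat -> R) (n : 'I_N).
Hypothesis qT_sum1 : \sum_(m < N.+1) qT m = 1.
Hypothesis okJ : forall m, (m <= N)%N -> forall z, 0 < z < 1 ->
  Eiter_ok q (pred1 (n : nat)) N (lnJ m) (upd (th0 R) n z).
Hypothesis okS : forall m, (m <= N)%N -> forall z, 0 < z < 1 ->
  Eiter_ok q (pred1 (n : nat)) N (lnS m) (upd (th0 R) n z).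

Let skip01 z : 0 < z < 1 ->
  forall k : 'I_N, pred1 (n : nat) k -> 0 < upd (th0 R) n z k < 1.
Proof. by move=> z01 k /eqP ->; rewrite /upd (eqxx (n : nat)). Qed.

Lemma Eiter_ln_prior_but z : 0 < z < 1 ->
  Eiter q (pred1 (n : nat)) N lnP (upd (th0 R) n z) =
  prior_term x mu sig delta2 n z +
  Eiter q (pred1 (n : nat)) N (prior_rest x mu sig delta2 n) (th0 R).
Proof.
move=> z01.
have okP := Eiter_ok_ln_prior (skip01 z01) (leq0n N) (okJ (leq0n N) z01) (okS (leq0n N) z01).
have term_inv th k t : ~~ pred1 (n : nat) k ->
    prior_term x mu sig delta2 n (upd th k t n) = prior_term x mu sig delta2 n (th n).
  by move=> /negbTE kn; rewrite /upd eq_sym [_ == _]kn.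
have okT := Eiter_ok_invariant (f := fun th => prior_term x mu sig delta2 n (th n))
  (upd (th0 R) n z) q_int q_norm term_inv.
(* [prior_rest n] ignores coordinate n, so the base point of its expectation is irrelevant. *)
have -> : Eiter q (pred1 (n : nat)) N (prior_rest x mu sig delta2 n) (th0 R) =
    Eiter q (pred1 (n : nat)) N (prior_rest x mu sig delta2 n) (upd (th0 R) n z).
  apply: (@Eiter_indep _ q _ N n) => [a b ab | k kn]; last by rewrite /upd (negbTE kn).
  by rewrite /prior_rest; congr (_ + _); apply: eq_bigr => k kn; rewrite ab.
rewrite (Eiter_ext q (f := prior_rest x mu sig delta2 n)
  (g := fun th => 1 * lnP th + (-1) * prior_term x mu sig delta2 n (th n))).
  rewrite Eiter_lin // (Eiter_invariant (f := fun th => prior_term x mu sig delta2 n (th n))) //.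
  by rewrite [upd _ _ _ n]/upd (eqxx (n : nat)); ring.
move=> th' /(admissible_in_cube (skip01 z01)) th'01.
by rewrite (ln_prior_split _ _ _ _ n) //; ring.
Qed.

Lemma expR_ETth_but_ln_joint z : 0 < z < 1 ->
  expR (ETth_but N qT q n (fun m => lnJ m) z) =
  gb x mu sig delta2 qT q n z *
  (sig n * expR (\sum_(m < N.+1) qT m * ln (gauss_lik y sh2 sw2 m / N.+1%:R) +
     Eiter q (pred1 (n : nat)) N (prior_rest x mu sig delta2 n) (th0 R))).
Proof.
move=> z01.
have -> : ETth_but N qT q n (fun m => lnJ m) z =
    ETth_but N qT q n (fun m => lnS m) z +
    \sum_(m < N.+1) qT m * ln (gauss_lik y sh2 sw2 m / N.+1%:R) +
    (prior_term x mu sig delta2 n z +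
     Eiter q (pred1 (n : nat)) N (prior_rest x mu sig delta2 n) (th0 R)).
  set a := prior_term _ _ _ _ _ z + _.
  have -> : a = \sum_(m < N.+1) qT m * a by rewrite -mulr_suml qT_sum1 mul1r.
  rewrite /ETth_but -!big_split /=.
  apply: eq_bigr => m _; have mN := ltn_ord m.
  rewrite (Eiter_ln_joint (skip01 z01) mN (okJ mN z01) (okS mN z01)) Eiter_ln_prior_but //.
  by rewrite /a; ring.
rewrite expRD expRD (expRD (prior_term _ _ _ _ _ _)) expR_prior_term // /gb /F2 expRD.
by ring.
Qed.

End ConditionalOnTheta.

End ExpectedLogJoint.

Theorem mainTheorem6 (R : realType) (N M : nat) (hN : (1 <= N)%N) (hM : (1 <= M)%N)
  (y : 'I_M -> R[i]) (x mu sig : 'I_N -> R) (hsig : forall n, 0 < sig n)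
  (delta2 sh2 sw2 : R) (hd : 0 < delta2) (hh : 0 < sh2) (hw : 0 < sw2)
  (qT : nat -> R)
  (hqT0 : forall m, (m <= N)%N -> 0 <= qT m)
  (hqT1 : \sum_(m < N.+1) qT m = 1)
  (q : nat -> R -> R)
  (hq0 : forall k, (k < N)%N -> forall t, 0 < t < 1 -> 0 <= q k t)
  (hqi : forall k, (k < N)%N ->
     (@lebesgue_measure R).-integrable `]0, 1[ (fun t => (q k t)%:E))
  (hq1 : forall k, (k < N)%N -> Rintegral (@lebesgue_measure R) `]0, 1[ (q k) = 1)
  (* all expectations involved are finite *)
  (hfinS : forall m, (m <= N)%N ->
     Eiter_ok q pred0 N (fun th => ln (complex.Re (Ssum N m th))) (th0 R))
  (hfinJ : forall m, (m <= N)%N ->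
     Eiter_ok q pred0 N (fun th => ln (joint y x mu sig delta2 sh2 sw2 m th)) (th0 R))
  (hfinS' : forall (n : 'I_N) m, (m <= N)%N -> forall z, 0 < z < 1 ->
     Eiter_ok q (pred1 (n : nat)) N (fun th => ln (complex.Re (Ssum N m th)))
       (upd (th0 R) n z))
  (hfinJ' : forall (n : 'I_N) m, (m <= N)%N -> forall z, 0 < z < 1 ->
     Eiter_ok q (pred1 (n : nat)) N
       (fun th => ln (joint y x mu sig delta2 sh2 sw2 m th)) (upd (th0 R) n z)) :
  (forall m : 'I_N.+1,
     expR (Eth N q (fun th => ln (joint y x mu sig delta2 sh2 sw2 m th))) /
     (\sum_(k < N.+1) expR (Eth N q (fun th => ln (joint y x mu sig delta2 sh2 sw2 k th))))
     = ga N y sh2 sw2 q m / (\sum_(k < N.+1) ga N y sh2 sw2 q k))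
  /\
  (forall n : 'I_N,
     (* the unnormalized q*(theta_n) is normalizable *)
     (@lebesgue_measure R).-integrable `]0, 1[ (fun z =>
        (expR (ETth_but N qT q n
           (fun m th => ln (joint y x mu sig delta2 sh2 sw2 m th)) z))%:E) ->
     forall z, 0 < z < 1 ->
       expR (ETth_but N qT q n
               (fun m th => ln (joint y x mu sig delta2 sh2 sw2 m th)) z) /
       Rintegral (@lebesgue_measure R) `]0, 1[ (fun z' =>
          expR (ETth_but N qT q n
               (fun m th => ln (joint y x mu sig delta2 sh2 sw2 m th)) z'))
       = gb x mu sig delta2 qT q n z /
         Rintegral (@lebesgue_measure R) `]0, 1[ (gb x mu sig delta2 qT q n)).
Proof.
split.
  have scale (m : 'I_N.+1) := expR_Eth_ln_joint hsig hd hh hw hqi hq1 (ltn_ord m)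
    (hfinJ m (ltn_ord m)) (hfinS m (ltn_ord m)).
  apply: normalize_scale => [|m]; last by rewrite scale.
  by rewrite gt_eqF // divr_gt0 ?expR_gt0 // mulr_gt0 ?ltr0n // exprn_gt0 // mulr_gt0 // pi_gt0.
move=> n joint_int z z01.
have scale t (t01 : 0 < t < 1) :=
  expR_ETth_but_ln_joint hsig hd hh hw hqi hq1 hqT1 (hfinJ' n) (hfinS' n) t01.
apply: (Rintegral_normalize_scale _ _ _ joint_int); last 2 first.
- by move=> t; rewrite /= in_itv /=; exact: scale.
- by rewrite /= in_itv.
- exact: measurable_itv.
by rewrite gt_eqF // mulr_gt0 ?expR_gt0.
Qed.
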